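(* Let $\bar\alpha\in[0,1]$ and $n\ge1$. The minimum of $C(\boldsymbol{\alpha})$ over all $\boldsymbol{\alpha}\in[0,1]^n$ satisfying $G(\boldsymbol{\alpha})=0$ is attained at $\boldsymbol{\alpha}_*=(\bar\alpha,\bar\alpha,\dots,\bar\alpha)$, and the minimum value is $C(\boldsymbol{\alpha}_* )=n\,c(\bar\alpha)$; that is, $C(\boldsymbol{\alpha})\ge n\,c(\bar\alpha)$ for every $\boldsymbol{\alpha}\in[0,1]^n$ with $G(\boldsymbol{\alpha})=0$.
   Context: Model of a road with $n\ge1$ parallel lanes of common length $d>0$. Vehicles have length $L>0$. A vehicle keeps a headway (space gap) $\bar h$ to the vehicle in front of it if both it and the vehicle in front are autonomous, and headway $h$ otherwise, where $0\le \bar h<h$. Vehicle types within a lane are i.i.d. Bernoulli: each vehicle in lane $i$ is autonomous with probability $\alpha_i\in[0,1]$ (the lane's autonomy level). Set $k_1=(L+h)/d$ and $k_2=(h-\bar h)/d$, so $k_1>k_2>0$ and $k_1-k_2=(L+\bar h)/d>0$. The capacity of a lane with autonomy level $\alpha\in[0,1]$ is $$c(\alpha)=\frac{1}{k_1-k_2\alpha^2}=\frac{d}{L+h-(h-\bar h)\alpha^2}.$$ Let $\bar\alpha\in[0,1]$ be the overall fraction of autonomous vehicles on the road. For $\boldsymbol{\alpha}=(\alpha_1,\dots,\alpha_n)\in[0,1]^n$ define $C(\boldsymbol{\alpha})=\sum_{i=1}^n c(\alpha_i)$ (total capacity) and $G(\boldsymbol{\alpha})=\sum_{i=1}^n(\alpha_i-\bar\alpha)c(\alpha_i)$;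 the constraint $G(\boldsymbol{\alpha})=0$ expresses that the overall autonomy level equals $\bar\alpha$. *)

From Stdlib Require Import Reals Lra.
Open Scope R_scope.

Fixpoint rsum (n : nat) (f : nat -> R) : R :=
  match n with
  | O => 0
  | S m => rsum m f + f m
  end.

(* Capacity of a lane with autonomy level a:
   c(a) = d / (L + h - (h - hbar) a^2) = 1/(k1 - k2 a^2). *)
Definition cap (d L h hbar a : R) : R := d / (L + h - (h - hbar) * a ^ 2).

Definition Ctot (d L h hbar : R) (n : nat) (alpha : nat -> R) : R :=
  rsum n (fun i => cap d L h hbar (alpha i)).

Definition Gcon (d L h hbar abar : R) (n : nat) (alpha : nat -> R) : R :=
  rsum n (fun i => (alpha i - abar) * cap d L h hbar (alpha i)).

(* The Lagrangian C - mu G, with multiplier mu = c'(abar) / c(abar), is a sum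
   of one-lane terms, and each term exceeds c(abar) by
   d (h - hbar) (a - abar)^2 / (D(a) D(abar)) >= 0, where D is the denominator
   of c.  On the feasible set G = 0 the Lagrangian equals C, so C >= n c(abar). *)
From Stdlib Require Import Reals Lra Lia.
Open Scope R_scope.

Lemma rsum_const n c : rsum n (fun _ => c) = INR n * c.
Proof. induction n as [|n IH]; simpl rsum; [simpl; ring | rewrite IH, S_INR; ring]. Qed.

Lemma rsum_minus_scal n f g m :
  rsum n (fun i => f i - m * g i) = rsum n f - m * rsum n g.
Proof. induction n as [|n IH]; simpl; [ring | rewrite IH; ring]. Qed.

Lemma rsum_ge_const n f c :
  (forall i, (i < n)%nat -> f i >= c) -> rsum n f >= INR n * c.
Proof.
  induction n as [|n IH]; intros Hf; simpl rsum; [simpl; lra |].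
  rewrite S_INR.
  assert (rsum n f >= INR n * c) by (apply IH; intros; apply Hf; lia).
  assert (f n >= c) by (apply Hf; lia).
  lra.
Qed.

Section OneLane.

Variables d L h hbar abar : R.
Hypothesis hd : 0 <= d.
Hypothesis hLhbar : 0 < L + hbar.
Hypothesis hh : hbar <= h.
Hypothesis habar : 0 <= abar <= 1.

Lemma cap_denom_pos a : 0 <= a <= 1 -> 0 < L + h - (h - hbar) * a ^ 2.
Proof. intros Ha; assert (a ^ 2 <= 1) by nra; nra. Qed.

Definition cap_multiplier : R := 2 * (h - hbar) * abar / (L + h - (h - hbar) * abar ^ 2).

Lemma cap_lagrangian_gap a : 0 <= a <= 1 ->
  cap d L h hbar a - cap_multiplier * ((a - abar) * cap d L h hbar a) - cap d L h hbar abar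
  = d * (h - hbar) * (a - abar) ^ 2
    / ((L + h - (h - hbar) * abar ^ 2) * (L + h - (h - hbar) * a ^ 2)).
Proof.
  intros Ha.
  pose proof (cap_denom_pos a Ha); pose proof (cap_denom_pos abar habar).
  unfold cap, cap_multiplier; field; lra.
Qed.

Lemma cap_lagrangian_ge a : 0 <= a <= 1 ->
  cap d L h hbar a - cap_multiplier * ((a - abar) * cap d L h hbar a) >= cap d L h hbar abar.
Proof.
  intros Ha.
  enough (0 <= cap d L h hbar a - cap_multiplier * ((a - abar) * cap d L h hbar a)
               - cap d L h hbar abar) by lra.
  rewrite (cap_lagrangian_gap a Ha).
  pose proof (cap_denom_pos a Ha); pose proof (cap_denom_pos abar habar).
  apply Rmult_le_pos.
  - apply Rmult_le_pos; [apply Rmult_le_pos; lra | apply pow2_ge_0].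
  - left; apply Rinv_0_lt_compat, Rmult_lt_0_compat; assumption.
Qed.

Lemma Ctot_ge_of_Gcon_eq0 n alpha :
  (forall i, (i < n)%nat -> 0 <= alpha i <= 1) ->
  Gcon d L h hbar abar n alpha = 0 ->
  Ctot d L h hbar n alpha >= INR n * cap d L h hbar abar.
Proof.
  intros Halpha HG.
  replace (Ctot d L h hbar n alpha)
    with (Ctot d L h hbar n alpha - cap_multiplier * Gcon d L h hbar abar n alpha)
    by (rewrite HG; ring).
  unfold Ctot, Gcon; rewrite <- rsum_minus_scal.
  apply rsum_ge_const; intros i Hi.
  exact (cap_lagrangian_ge (alpha i) (Halpha i Hi)).
Qed.

End OneLane.

Lemma Gcon_const d L h hbar abar n : Gcon d L h hbar abar n (fun _ => abar) = 0.
Proof. unfold Gcon; rewrite Rminus_diag, rsum_const; ring. Qed.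

Lemma Ctot_const d L h hbar n a : Ctot d L h hbar n (fun _ => a) = INR n * cap d L h hbar a.
Proof. unfold Ctot; apply rsum_const. Qed.

Theorem proposition1 (d L h hbar abar : R) (n : nat)
  (hd : 0 < d) (hL : 0 < L) (hhbar : 0 <= hbar) (hh : hbar < h)
  (habar : 0 <= abar <= 1) (hn : (1 <= n)%nat) :
  (* alpha_* = (abar,...,abar) is feasible and attains n c(abar) *)
  Gcon d L h hbar abar n (fun _ => abar) = 0 /\
  Ctot d L h hbar n (fun _ => abar) = INR n * cap d L h hbar abar /\
  (* it is a minimiser over the feasible set *)
  (forall alpha : nat -> R,
     (forall i, (i < n)%nat -> 0 <= alpha i <= 1) ->
     Gcon d L h hbar abar n alpha = 0 ->
     Ctot d L h hbar n alpha >= INR n * cap d L h hbar abar).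
Proof.
  split; [| split].
  - apply Gcon_const.
  - apply Ctot_const.
  - apply Ctot_ge_of_Gcon_eq0; lra.
Qed.
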